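(* Let $\mathcal{G}$ be a directed acyclic graph over variables $\mathbf{V}=\mathbf{O}\cup\mathbf{L}$ (observed and latent), let $X\in\mathbf{O}$ and let $Y$ be a variable of $\mathcal{G}$, and let $\Pi$ be the policy space with policy inputs $\mathbf{Pa}^\Pi\subseteq\mathbf{O}\setminus\mathbf{De}(X)$. If there exists a $\pi$-backdoor admissible set with respect to $\langle\mathcal{G},\Pi\rangle$, then $\mathbf{Z}=\mathbf{An}(\{X,Y\})\cap\mathbf{Pa}^\Pi$ is a $\pi$-backdoor admissible set with respect to $\langle\mathcal{G},\Pi\rangle$.
   Context: $\mathbf{An}(\cdot)$ and $\mathbf{De}(\cdot)$ denote ancestors and descendants in $\mathcal{G}$. A policy is a stochastic mapping $\pi(X\mid\mathbf{Pa}^\Pi)$ from values of $\mathbf{Pa}^\Pi$ to distributions over $X$; the policy space $\Pi$ is the set of all such mappings. $\mathcal{G}_{\underline{X}}$ denotes the graph obtained from $\mathcal{G}$ by removing all edges outgoing from $X$. A set $\mathbf{Z}$ is $\pi$-backdoor admissible w.r.t. $\langle\mathcal{G},\Pi\rangle$ iff $\mathbf{Z}\subseteq\mathbf{Pa}^\Pi$ and $Y$ is d-separated from $X$ by $\mathbf{Z}$ in $\mathcal{G}_{\underline{X}}$. *)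

From mathcomp Require Import all_boot.
Set Implicit Arguments. Unset Strict Implicit. Unset Printing Implicit Defensive.

Section Graphs.
Variable V : finType.

(* A directed graph over V is an edge relation e (e u v means u -> v). *)
Definition acyclic (e : rel V) : Prop :=
  forall (x : V) (p : seq V), path e x p -> last x p = x -> p = [::].

Definition anc (e : rel V) (S : {set V}) : {set V} :=
  [set v | [exists w in S, connect e v w]].

Definition desc (e : rel V) (x : V) : {set V} := [set v | connect e x v].

Definition remove_out (e : rel V) (x : V) : rel V :=
  [rel u v | e u v && (u != x)].

Definition adj (e : rel V) : rel V := [rel u v | e u v || e v u].

Definition blocked (e : rel V) (Z : {set V}) (x0 : V) (s : seq V) : Prop :=
  exists i : nat, 0 < i < (size s).-1 /\
    let a := nth x0 s i.-1 in
    let b := nth x0 s i in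
    let c := nth x0 s i.+1 in
    if e a b && e c b then [disjoint desc e b & Z] else b \in Z.

Definition dsep (e : rel V) (x y : V) (Z : {set V}) : Prop :=
  forall p : seq V, path (adj e) x p -> last x p = y -> uniq (x :: p) ->
    blocked e Z x (x :: p).

(* pi-backdoor admissibility w.r.t. <G, Pi>, where Pi is the policy space
   with inputs Pa (only Pa matters). *)
Definition pi_backdoor (e : rel V) (Pa : {set V}) (X Y : V) (Z : {set V})
  : Prop :=
  Z \subset Pa /\ dsep (remove_out e X) X Y Z.

End Graphs.

From mathcomp Require Import all_boot zify.
Set Implicit Arguments. Unset Strict Implicit. Unset Printing Implicit Defensive.

(* Let A be the set of ancestors of {X, Y} in G_X; it is also their set of
   ancestors in G, because a directed path of G reaching X or Y can be cut at
   its first visit to X.  Suppose a simple path between X and Y in G_X is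
   active given A ∩ Pa.  Every collider on it has a descendant in A, hence lies
   in A; walking from any vertex along the path in the direction of its edge
   until a collider or an endpoint is reached shows that the whole path lies in
   A.  Its non-colliders, being outside A ∩ Pa, are therefore outside Pa ⊇ Z.
   A collider with no descendant in Z is an ancestor of X or Y, so the path can
   be rerouted along a shortest directed path from that collider to the
   endpoint, starting at the first vertex of the path lying on it: the new
   vertices avoid Z and are not colliders.  Each rerouting removes a collider
   without descendants in Z, so iterating yields a path active given Z,
   contradicting the admissibility of Z. *)

Section Triples.
Variable T : Type.

Fixpoint triples (s : seq T) : seq (T * T * T) :=
  if s is a :: ((b :: c :: _) as s') then (a, b, c) :: triples s' else [::].

Definition junction (s : seq T) (b : T) (t : seq T) : seq (T * T * T) :=
  match s, t with a :: s', c :: _ => [:: (last a s', b, c)] | _, _ => [::] end.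

Definition flip_triple (t : T * T * T) : T * T * T :=
  let: (a, b, c) := t in (c, b, a).

Lemma triples_cat_cons s b t :
  triples (s ++ b :: t) = triples (rcons s b) ++ junction s b t ++ triples (b :: t).
Proof.
elim: s => [|x [|y [|z s]] IH] //; first by case: t IH.
  by rewrite /= in IH *; rewrite IH.
by rewrite (_ : triples _ = (x, y, z) :: triples ([:: y, z & s] ++ b :: t)) // IH.
Qed.

Lemma size_triples s : size (triples s) = (size s).-2.
Proof. by elim: s => [|x [|y [|z s]] IH] //=; rewrite IH. Qed.

Lemma nth_triples x0 s i : i.+2 < size s ->
  nth (x0, x0, x0) (triples s) i = (nth x0 s i, nth x0 s i.+1, nth x0 s i.+2).
Proof. by elim: s i => [|x [|y [|z s]] IH] [|i] //= lt_i; rewrite IH. Qed.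

Lemma triples_rev s : triples (rev s) = rev (map flip_triple (triples s)).
Proof.
case: s => [|x0 s] //.
apply: (@eq_from_nth _ (x0, x0, x0)) => [|i].
  by rewrite size_rev size_map !size_triples size_rev.
rewrite size_triples size_rev => lt_i.
rewrite nth_triples ?size_rev; last by lia.
rewrite [RHS]nth_rev ?size_map ?size_triples; last by lia.
rewrite (nth_map (x0, x0, x0)) ?size_triples; last by lia.
rewrite nth_triples; last by lia.
by rewrite !nth_rev; try lia; congr (_, _, _); congr nth; lia.
Qed.

Lemma all_triples_rev (f : pred (T * T * T)) s :
  (forall t, f (flip_triple t) = f t) -> all f (triples (rev s)) = all f (triples s).
Proof. by move=> f_flip; rewrite triples_rev all_rev all_map; apply: eq_all. Qed.

Lemma count_triples_rev (f : pred (T * T * T)) s :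
  (forall t, f (flip_triple t) = f t) -> count f (triples (rev s)) = count f (triples s).
Proof. by move=> f_flip; rewrite triples_rev count_rev count_map; apply: eq_count. Qed.

Lemma all_triples_behead (f : pred (T * T * T)) s :
  all f (triples s) -> all f (triples (behead s)).
Proof. by case: s => [|x [|y [|z s]]] //= /andP[]. Qed.

End Triples.

Section TriplesMem.
Variable T : eqType.

Lemma mem_triples x0 s (t : T * T * T) : t \in triples s ->
  exists2 i, i.+2 < size s & t = (nth x0 s i, nth x0 s i.+1, nth x0 s i.+2).
Proof.
case/(nthP (x0, x0, x0)) => i; rewrite size_triples => lt_i <-.
by exists i; rewrite ?nth_triples //; lia.
Qed.

Lemma mem_triples_mid s (a b c : T) : (a, b, c) \in triples s -> b \in s.
Proof. by case/(mem_triples a) => i lt_i [_ -> _]; rewrite mem_nth //; lia. Qed.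

Lemma mem_triples_rcons_mid s w (a b c : T) :
  (a, b, c) \in triples (rcons s w) -> b \in s.
Proof.
case/(mem_triples a) => i; rewrite size_rcons => lt_i [_ -> _].
by rewrite nth_rcons ifT ?mem_nth //; lia.
Qed.

Lemma sorted_triples (r : rel T) s (a b c : T) :
  sorted r s -> (a, b, c) \in triples s -> r a b && r b c.
Proof.
move=> /(sortedP a) r_s /(mem_triples a) [i lt_i [ea eb ec]].
by rewrite ea eb ec !r_s //; lia.
Qed.

End TriplesMem.

Lemma split_first (T : Type) (P : pred T) s : has P s ->
  exists s1 w s2, [/\ s = s1 ++ w :: s2, P w & ~~ has P s1].
Proof.
elim: s => [|x s IH] //=.
case Px: (P x) => /= s_P; first by exists [::], x, s.
have [s1 [w [s2 [-> Pw no_P]]]] := IH s_P.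
by exists (x :: s1), w, s2; rewrite /= Px.
Qed.

Lemma acyclic_sub (V : finType) (e e' : rel V) : subrel e' e -> acyclic e -> acyclic e'.
Proof. by move=> sub_e ac x p /(sub_path sub_e); apply: ac. Qed.

Lemma acyclic_asym (V : finType) (e : rel V) : acyclic e -> forall u v, e u v -> ~~ e v u.
Proof.
move=> ac u v euv; apply/negP => evu.
by have := ac u [:: v; u]; rewrite /= euv evu => /(_ isT erefl).
Qed.

Section RemoveOut.
Variables (V : finType) (e : rel V) (x : V).

Lemma remove_out_sub : subrel (remove_out e x) e.
Proof. by move=> u v /andP[]. Qed.

Lemma connect_remove_out u v : connect e u v ->
  connect (remove_out e x) u v || connect (remove_out e x) u x.
Proof.
case/connectP=> p up ->; elim: p u up => [|w p IH] u /=; first by rewrite connect0.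
case/andP=> euw wp; have [->|ux] := eqVneq u x; first by rewrite connect0 orbT.
have ex_uw : remove_out e x u w by rewrite /remove_out /= euw.
by case/orP: (IH w wp) => /(connect_trans (connect1 ex_uw)) ->; rewrite ?orbT.
Qed.

Lemma anc_remove_out (S : {set V}) : x \in S -> anc (remove_out e x) S = anc e S.
Proof.
move=> xS; apply/setP => v; rewrite !inE; apply/existsP/existsP => -[w /andP[wS vw]].
  by exists w; rewrite wS (connect_sub _ vw) // => a b /remove_out_sub/connect1.
by case/orP: (connect_remove_out vw) => [vw'|vx]; [exists w | exists x]; rewrite ?wS ?xS.
Qed.

End RemoveOut.

Section DSeparation.
Variables (V : finType) (E : rel V).

Definition open_triple (Z : {set V}) (t : V * V * V) : bool :=
  let: (a, b, c) := t in
  if E a b && E c b then ~~ [disjoint desc E b & Z] else b \notin Z.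

Lemma blocked_triples Z x0 s :
  blocked E Z x0 s <-> ~~ all (open_triple Z) (triples s).
Proof.
rewrite -has_predC; split.
  move=> [i [/andP[i_gt0 lt_i] blocked_i]]; apply/(has_nthP (x0, x0, x0)).
  exists i.-1; first by rewrite size_triples; lia.
  rewrite nth_triples; last by lia.
  by rewrite prednK //=; move: blocked_i => /=; case: ifP => _ ->.
case/(has_nthP (x0, x0, x0)) => i; rewrite size_triples => lt_i.
rewrite nth_triples /=; last by lia.
move=> not_open; exists i.+1; split; first lia.
by move: not_open => /=; case: ifP => _; rewrite ?negbK.
Qed.

Definition skel_path (x y : V) (s : seq V) : Prop :=
  [/\ head x s = x, last x s = y, sorted (adj E) s & uniq s].

Lemma dsep_skel_pathP x y Z :
  dsep E x y Z <-> forall s, skel_path x y s -> ~~ all (open_triple Z) (triples s).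
Proof.
split=> [sep [|z p] [hd lt srt un]|sep p xp lt un].
- exact: proj1 (blocked_triples _ _ _) (sep [::] isT lt isT).
- by rewrite /= in hd; subst z; apply/blocked_triples/sep.
- exact/blocked_triples/sep.
Qed.

Lemma skel_path_rev x y s : skel_path x y s -> skel_path y x (rev s).
Proof.
case: s => [|z p] [/= hd lt srt un]; first by rewrite -lt.
split; rewrite ?rev_uniq //.
- by rewrite -lt lastI rev_rcons.
- by rewrite rev_cons last_rcons.
- by rewrite rev_sorted (eq_sorted (e' := adj E)) // => u v; apply: orbC.
Qed.

Lemma skel_path_splice x y s1 w s2 d : skel_path x y (s1 ++ w :: s2) ->
  path E w d -> uniq (w :: d) -> last w d = y -> ~~ has [in w :: d] s1 ->
  skel_path x y (s1 ++ w :: d).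
Proof.
case=> hd _ srt un wd un_wd lt s1_wd; split.
- by case: s1 hd {srt un s1_wd}.
- by rewrite last_cat.
- move: srt; rewrite !sorted_cat_cons => /andP[-> _] /=.
  by apply: sub_path wd => u v euv; rewrite /adj /= euv.
- by move: un; rewrite !cat_uniq => /andP[-> _]; rewrite has_sym s1_wd.
Qed.

Lemma skel_path_reroute x y s b : skel_path x y s -> b \in s -> connect E b y ->
  exists s1 w s2 d, [/\ s = s1 ++ w :: s2, skel_path x y (s1 ++ w :: d),
    path E w d, b \notin s1 & {subset w :: d <= desc E b}].
Proof.
move=> st bs /connectP[p0 bp0 y_p0]; move: y_p0.
case: (shortenP bp0) => p bp un_bp _ y_p.
have s_bp : has [in b :: p] s by apply/hasP; exists b; rewrite ?mem_head.
have [s1 [w [s2 [s_eq w_bp s1_bp]]]] := split_first s_bp.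
have [d1 [d2 bp_eq]] : exists d1 d2, b :: p = d1 ++ w :: d2.
  by case/splitPr: w_bp => d1 d2; exists d1, d2.
have wd2 : path E w d2.
  by move: (bp : sorted E (b :: p)); rewrite bp_eq sorted_cat_cons => /andP[].
have sub_bp : {subset w :: d2 <= b :: p}.
  by move=> v; rewrite bp_eq mem_cat => ->; rewrite orbT.
exists s1, w, s2, d2; split => //.
- have st12 : skel_path x y (s1 ++ w :: s2) by rewrite -s_eq.
  apply: (skel_path_splice st12 wd2).
  + by move: un_bp; rewrite bp_eq cat_uniq => /and3P[].
  + by move: (y_p : y = last b (b :: p)); rewrite bp_eq last_cat.
  + by apply: contra s1_bp; apply: sub_has.
- by apply: contra s1_bp => b_s1; apply/hasP; exists b; rewrite ?mem_head.
- by move=> v /sub_bp /(path_connect bp); rewrite inE.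
Qed.

Lemma anc_connect (S : {set V}) u v : connect E u v -> v \in anc E S -> u \in anc E S.
Proof.
move=> uv; rewrite !inE => /existsP[w /andP[wS vw]].
by apply/existsP; exists w; rewrite wS (connect_trans uv vw).
Qed.

Lemma mem_anc_set2 x y v : (v \in anc E [set x; y]) = connect E v x || connect E v y.
Proof.
rewrite inE; apply/existsP/orP => [[w /andP[]]|[vx|vy]].
- by rewrite !inE => /orP[]/eqP-> ->; [left|right].
- by exists x; rewrite !inE eqxx.
- by exists y; rewrite !inE eqxx orbT.
Qed.

Section Ancestral.
Variable P : pred V.
Hypothesis P_parent : forall u v, E u v -> P v -> P u.

Definition collider_in (t : V * V * V) : bool :=
  let: (a, b, c) := t in (E a b && E c b) ==> P b.

Lemma forward_edge_ancestral p x y : E x y -> path (adj E) y p -> P (last y p) ->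
  all collider_in (triples [:: x, y & p]) -> P y.
Proof.
elim: p x y => [|z p IH] x y exy /=; first by move=> _ Py.
case/andP=> /orP[eyz|ezy] zp last_P /andP[col cols].
- exact: P_parent eyz (IH y z eyz zp last_P cols).
- by move: col; rewrite exy ezy.
Qed.

Lemma path_ancestral p x : path (adj E) x p -> P x -> P (last x p) ->
  all collider_in (triples (x :: p)) -> all P (x :: p).
Proof.
elim: p x => [|y p IH] x xp Px last_P cols; first by rewrite /= Px.
case/andP: xp => /orP[exy|eyx] yp; rewrite /= Px.
  exact: IH yp (forward_edge_ancestral exy yp last_P cols) last_P (all_triples_behead cols).
exact: IH yp (P_parent eyx Px) last_P (all_triples_behead cols).
Qed.

Lemma skel_path_ancestral x y s : skel_path x y s -> P x -> P y ->
  all collider_in (triples s) -> all P s.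
Proof. by case: s => [|z p] // [/= -> <- xp _] Px Py; apply: path_ancestral. Qed.

End Ancestral.

Hypothesis E_asym : forall u v, E u v -> ~~ E v u.

Lemma junction_triples_forward s w d (a b c : V) : path E w d ->
  (a, b, c) \in junction s w d ++ triples (w :: d) -> E b c && (b \in w :: d).
Proof.
move=> wd; rewrite mem_cat => /orP[|abc].
  case: s d wd => [|u s] [|v d] //= /andP[ewv _].
  by rewrite inE => /eqP[_ -> ->]; rewrite ewv mem_head.
by rewrite (andP (sorted_triples (wd : sorted E (w :: d)) abc)).2 (mem_triples_mid abc).
Qed.

Section Rerouting.
Variable Z : {set V}.

Definition blocking_collider (t : V * V * V) : bool :=
  let: (a, b, c) := t in [&& E a b, E c b & [disjoint desc E b & Z]].

(* Invariant of the rerouting: a collider that is an ancestor of an endpoint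
   can be bypassed along a directed path to that endpoint. *)
Definition weakly_open (A : {set V}) (t : V * V * V) : bool :=
  let: (a, b, c) := t in if E a b && E c b then b \in A else b \notin Z.

Lemma blocking_collider_flip t : blocking_collider (flip_triple t) = blocking_collider t.
Proof. by case: t => [[a b] c]; rewrite /= andbCA. Qed.

Lemma weakly_open_flip A t : weakly_open A (flip_triple t) = weakly_open A t.
Proof. by case: t => [[a b] c]; rewrite /= andbC. Qed.

Lemma open_triple_weakly A t :
  weakly_open A t -> ~~ blocking_collider t -> open_triple Z t.
Proof. by case: t => [[a b] c] /=; case: (E a b); case: (E c b). Qed.

Lemma bypass_collider_forward A x y s (a b c : V) :
  skel_path x y s -> all (weakly_open A) (triples s) ->
  (a, b, c) \in triples s -> blocking_collider (a, b, c) -> connect E b y ->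
  exists s', [/\ skel_path x y s', all (weakly_open A) (triples s') &
    count blocking_collider (triples s') < count blocking_collider (triples s)].
Proof.
move=> st open_s abc blocking by'; have /and3P[_ _ b_Z] := blocking.
have [s1 [w [s2 [d [s_eq st' wd b_s1 desc_wd]]]]] :=
  skel_path_reroute st (mem_triples_mid abc) by'.
have fresh t : t \in junction s1 w d ++ triples (w :: d) ->
    weakly_open A t && ~~ blocking_collider t.
  case: t => [[a' b'] c'] /(junction_triples_forward wd) /andP[eb'c' b'_wd] /=.
  rewrite (negbTE (E_asym eb'c')) andbF /=.
  by rewrite (disjointFr b_Z) // desc_wd.
exists (s1 ++ w :: d); split => //.
  move: open_s; rewrite s_eq !triples_cat_cons !all_cat => /andP[-> _] /=.
  by rewrite -all_cat; apply/allP => t /fresh /andP[].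
have no_blocking : count blocking_collider (junction s1 w d ++ triples (w :: d)) = 0.
  by apply/eqP; rewrite -leqn0 leqNgt -has_count; apply/hasPn => t /fresh /andP[].
rewrite s_eq !triples_cat_cons !count_cat ltn_add2l -!count_cat no_blocking -has_count.
apply/hasP; exists (a, b, c) => //.
move: abc; rewrite s_eq triples_cat_cons mem_cat => /orP[/mem_triples_rcons_mid b_s1'|//].
by rewrite b_s1' in b_s1.
Qed.

Lemma bypass_collider A x y s (a b c : V) :
  skel_path x y s -> all (weakly_open A) (triples s) ->
  (a, b, c) \in triples s -> blocking_collider (a, b, c) -> b \in anc E [set x; y] ->
  exists s', [/\ skel_path x y s', all (weakly_open A) (triples s') &
    count blocking_collider (triples s') < count blocking_collider (triples s)].
Proof.
move=> st open_s abc blocking; rewrite mem_anc_set2 => /orP[bx|by']; last first.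
  exact: bypass_collider_forward st open_s abc blocking by'.
have cba : (c, b, a) \in triples (rev s) by rewrite triples_rev mem_rev (map_f _ abc).
have [s' [st' open' fewer]] := bypass_collider_forward (skel_path_rev st)
  (etrans (all_triples_rev _ (weakly_open_flip A)) open_s) cba
  (etrans (blocking_collider_flip (a, b, c)) blocking) bx.
exists (rev s'); split; first exact: skel_path_rev.
  by rewrite (all_triples_rev _ (weakly_open_flip A)).
by rewrite (count_triples_rev _ blocking_collider_flip)
  -(count_triples_rev s blocking_collider_flip).
Qed.

Lemma weakly_open_skel_path_active x y s : skel_path x y s ->
  all (weakly_open (anc E [set x; y])) (triples s) ->
  exists2 s', skel_path x y s' & all (open_triple Z) (triples s').
Proof.
have [n] := ubnP (count blocking_collider (triples s)).
elim: n s => // n IH s lt_n st open_s.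
have [/hasP[[[a b] c] abc blocking]|no_blocking] := boolP (has blocking_collider (triples s)).
  have b_anc : b \in anc E [set x; y].
    by have := allP open_s _ abc; case/and3P: blocking => /= -> ->.
  have [s' [st' open' fewer]] := bypass_collider st open_s abc blocking b_anc.
  by apply: IH st' open'; lia.
exists s => //; apply/allP => t t_s.
exact: open_triple_weakly (allP open_s t t_s) (hasPn no_blocking t t_s).
Qed.

Lemma active_weakly_open (W : {set V}) x y s : Z \subset W -> skel_path x y s ->
  all (open_triple (anc E [set x; y] :&: W)) (triples s) ->
  all (weakly_open (anc E [set x; y])) (triples s).
Proof.
set A := anc E [set x; y]; move=> ZW st act.
have cols : all (collider_in [in A]) (triples s).
  apply/allP => -[[a b] c] /(allP act) /=; case: ifP => //= _.
  rewrite -setI_eq0 => /set0Pn[z /setIP[bz /setIP[zA _]]].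
  by rewrite inE in bz; apply: anc_connect zA.
have sA : all [in A] s.
  apply: (skel_path_ancestral _ st) cols; first by move=> u v /connect1; apply: anc_connect.
    by rewrite mem_anc_set2 connect0.
  by rewrite mem_anc_set2 connect0 orbT.
apply/allP => -[[a b] c] abc; have bA : b \in A := allP sA b (mem_triples_mid abc).
move: (allP act _ abc); rewrite /= bA; case: ifP => // _.
by rewrite inE bA /=; apply: contra; apply: (subsetP ZW).
Qed.

Theorem dsep_anc_setI (W : {set V}) x y : Z \subset W -> dsep E x y Z ->
  dsep E x y (anc E [set x; y] :&: W).
Proof.
move=> ZW /dsep_skel_pathP Z_sep; apply/dsep_skel_pathP => s st; apply/negP => act.
have [s' st' act'] := weakly_open_skel_path_active st (active_weakly_open ZW st act).
by move: (Z_sep s' st'); rewrite act'.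
Qed.

End Rerouting.

End DSeparation.

Theorem lemma1 (V : finType) (e : rel V) (O Pa : {set V}) (X Y : V) :
  acyclic e ->
  X \in O ->
  Pa \subset O :\: desc e X ->
  (exists Z : {set V}, pi_backdoor e Pa X Y Z) ->
  pi_backdoor e Pa X Y (anc e [set X; Y] :&: Pa).
Proof.
move=> ac _ _ [Z [ZPa Z_sep]]; split; first exact: subsetIr.
rewrite -(anc_remove_out e (set21 X Y)).
apply: dsep_anc_setI ZPa Z_sep.
exact: acyclic_asym (acyclic_sub (@remove_out_sub _ e X) ac).
Qed.
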